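(* Let $a_1,\dots,a_q,b_1,\dots,b_q>0$ and \[ R(x)=\frac{\prod_{k=1}^{q}(a_k+x)}{\prod_{k=1}^{q}(b_k+x)}. \] Then $R$ is monotone increasing on $(0,\infty)$ if \[ \frac{e_q(b_1,\ldots,b_q)}{e_q(a_1,\ldots,a_q)}\ge\frac{e_{q-1}(b_1,\ldots,b_q)}{e_{q-1}(a_1,\ldots,a_q)}\ge\cdots\ge\frac{e_1(b_1,\ldots,b_q)}{e_1(a_1,\ldots,a_q)}\ge1, \] and monotone decreasing on $(0,\infty)$ if \[ \frac{e_q(b_1,\ldots,b_q)}{e_q(a_1,\ldots,a_q)}\le\frac{e_{q-1}(b_1,\ldots,b_q)}{e_{q-1}(a_1,\ldots,a_q)}\le\cdots\le\frac{e_1(b_1,\ldots,b_q)}{e_1(a_1,\ldots,a_q)}\le1. \]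
   Context: $e_m(c_1,\dots,c_q)=\sum_{1\le i_1<\cdots<i_m\le q}c_{i_1}\cdots c_{i_m}$ denotes the $m$-th elementary symmetric polynomial ($e_0=1$). *)

From mathcomp Require Import all_boot all_order all_algebra.
Set Implicit Arguments. Unset Strict Implicit. Unset Printing Implicit Defensive.
Import Order.TTheory GRing.Theory Num.Theory.
Local Open Scope ring_scope.

Definition elem_sym {R : comPzRingType} {q : nat} (m : nat) (c : 'I_q -> R) : R :=
  \sum_(S : {set 'I_q} | #|S| == m) \prod_(i in S) c i.

Definition ratfun {R : fieldType} {q : nat} (a b : 'I_q -> R) (x : R) : R :=
  (\prod_(k < q) (a k + x)) / (\prod_(k < q) (b k + x)).

From mathcomp Require Import all_boot all_order all_algebra.
From mathcomp Require Import ring zify.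
Import Order.TTheory GRing.Theory Num.Theory.
Local Open Scope ring_scope.

(* Expanding both products, [prod_k (c_k + x) = sum_m e_m(c) x^(q-m)], so [R(x) <= R(y)]
   becomes [A(x) B(y) <= A(y) B(x)] for [A], [B] the expansions for [a], [b].  The
   difference is a double sum over pairs (m, n) whose symmetric part is
   [(e_m(a) e_n(b) - e_n(a) e_m(b)) (y^(q-m) x^(q-n) - x^(q-m) y^(q-n))], a product of
   two nonnegative factors for [m <= n] when [e_m(b)/e_m(a)] is nondecreasing in [m].
   The decreasing case is the increasing one with [a] and [b] exchanged, as
   [R_(b,a) = 1 / R_(a,b)]. *)

Lemma elem_sym0 (R : comPzRingType) q (c : 'I_q -> R) : elem_sym 0 c = 1.
Proof.
rewrite /elem_sym (eq_bigl (pred1 set0)) => [|S]; last by rewrite /= cards_eq0.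
by rewrite big_pred1_eq big_set0.
Qed.

Lemma elem_sym_gt0 (R : numDomainType) q (c : 'I_q -> R) m :
  (forall k, 0 < c k) -> (m <= q)%N -> 0 < elem_sym m c.
Proof.
move=> c_gt0 le_mq.
have : (0 < #|[set S : {set 'I_q} | #|S| == m]|)%N.
  by rewrite card_draws card_ord bin_gt0.
case/card_gt0P => S; rewrite inE => /eqP cardS.
rewrite /elem_sym (bigD1 S) /=; last by rewrite cardS.
apply: ltr_wpDr; last exact: prodr_gt0.
by apply: sumr_ge0 => T _; apply: prodr_ge0 => i _; exact: ltW.
Qed.

Lemma prod_add_elem_sym (R : comPzRingType) q (c : 'I_q -> R) x :
  \prod_(k < q) (c k + x) = \sum_(m < q.+1) elem_sym m c * x ^+ (q - m).
Proof.
rewrite bigA_distr.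
transitivity (\sum_(S : {set 'I_q}) (\prod_(i in S) c i) * x ^+ (q - #|S|)).
  apply: eq_bigr => S _; rewrite (bigID (mem S)) /=.
  congr (_ * _); first by apply: eq_bigr => i ->.
  rewrite (eq_bigr (fun _ => x)) => [|i /negbTE -> //].
  rewrite prodr_const; congr (_ ^+ _).
  have -> : #|[pred i : 'I_q | i \notin S]| = #|~: S| by apply: eq_card => i; rewrite !inE.
  by rewrite cardsCs setCK card_ord.
rewrite (partition_big (fun S : {set 'I_q} => inord #|S| : 'I_q.+1) predT) //=.
apply: eq_bigr => m _; rewrite /elem_sym big_distrl /=.
have card_lt (S : {set 'I_q}) : (#|S| < q.+1)%N by rewrite ltnS -{9}(card_ord q) max_card.
apply: eq_big => S; last by move/eqP=> <-; rewrite inordK.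
by apply/eqP/eqP => [<-|->]; [rewrite inordK | rewrite inord_val].
Qed.

Lemma sumr_antisym_ge0 (R : numDomainType) (I : finType) (u : I -> I -> R) :
  (forall i j, 0 <= u i j + u j i) -> 0 <= \sum_i \sum_j u i j.
Proof.
move=> u_sym_ge0.
have sym_sum : \sum_i \sum_j (u i j + u j i) = (\sum_i \sum_j u i j) *+ 2.
  rewrite mulr2n -[in X in _ + X]exchange_big -big_split /=.
  by apply: eq_bigr => i _; rewrite big_split.
rewrite -(pmulrn_lge0 _ (ltn0Sn 1)) -sym_sum.
by apply: sumr_ge0 => i _; apply: sumr_ge0 => j _.
Qed.

Lemma expr_cross_le (R : numDomainType) (x y : R) i k :
  0 <= x -> x <= y -> x ^+ (i + k) * y ^+ i <= y ^+ (i + k) * x ^+ i.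
Proof.
move=> x_ge0 le_xy; have y_ge0 := le_trans x_ge0 le_xy.
rewrite !exprD !(mulrAC _ _ (_ ^+ i)) [y ^+ i * _]mulrC.
by apply: ler_wpM2l; [rewrite mulr_ge0 ?exprn_ge0 | exact: lerXn2r].
Qed.

Lemma sum_expr_cross_le (R : numDomainType) q (al be : 'I_q.+1 -> R) (x y : R) :
  (forall m n : 'I_q.+1, (m <= n)%N -> al n * be m <= al m * be n) ->
  0 <= x -> x <= y ->
  (\sum_(m < q.+1) al m * x ^+ (q - m)) * (\sum_(n < q.+1) be n * y ^+ (q - n)) <=
  (\sum_(m < q.+1) al m * y ^+ (q - m)) * (\sum_(n < q.+1) be n * x ^+ (q - n)).
Proof.
move=> al_be_mono x_ge0 le_xy.
pose u m n := al m * be n * (y ^+ (q - m) * x ^+ (q - n) - x ^+ (q - m) * y ^+ (q - n)).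
rewrite -subr_ge0 !mulr_suml -sumrB.
under eq_bigr => m _ do rewrite !mulr_sumr -sumrB.
rewrite (eq_bigr (fun m => \sum_n u m n)) => [|m _]; last first.
  by apply: eq_bigr => n _; rewrite /u; ring.
apply: sumr_antisym_ge0 => m n.
wlog le_mn : m n / (m <= n)%N => [sym|].
  by case: (leqP m n) => [|/ltnW] /sym //; rewrite addrC.
have -> : u m n + u n m = (al m * be n - al n * be m) *
    (y ^+ (q - m) * x ^+ (q - n) - x ^+ (q - m) * y ^+ (q - n)) by rewrite /u; ring.
apply: mulr_ge0; rewrite subr_ge0; first exact: al_be_mono.
have -> : (q - m = (q - n) + (n - m))%N by have := ltn_ord n; lia.
exact: expr_cross_le.
Qed.

Lemma prod_add_gt0 (R : numDomainType) q (c : 'I_q -> R) z :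
  (forall k, 0 < c k) -> 0 < z -> 0 < \prod_(k < q) (c k + z).
Proof. by move=> c_gt0 z_gt0; apply: prodr_gt0 => k _; apply: addr_gt0. Qed.

Lemma elem_sym_cross_le (R : realFieldType) q (a b : 'I_q -> R) :
  (forall k, 0 < a k) ->
  (forall m : nat, (0 < m)%N -> (m < q)%N ->
      elem_sym m b / elem_sym m a <= elem_sym m.+1 b / elem_sym m.+1 a) ->
  1 <= elem_sym 1 b / elem_sym 1 a ->
  forall m n : 'I_q.+1, (m <= n)%N -> elem_sym n a * elem_sym m b <= elem_sym m a * elem_sym n b.
Proof.
move=> a_gt0 ratio_succ ratio1 m n le_mn.
pose ratio k := elem_sym k b / elem_sym k a.
have ratio_mono : {in [pred k | (k <= q)%N] &, {homo ratio : i j / (i <= j)%N >-> i <= j}}.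
  apply: homo_leq_in => [//|k i j|i j _ /[!inE] le_jq k /andP[_ lt_kj]|].
  - exact: le_trans.
  - by rewrite inE (leq_trans (ltnW lt_kj)).
  move=> [_ _|k _ /[!inE] lt_kq]; first by rewrite /ratio !elem_sym0 divr1.
  exact: ratio_succ.
have := ratio_mono m n (ltn_ord m) (ltn_ord n) le_mn.
have ea_gt0 (k : 'I_q.+1) : 0 < elem_sym k a by exact: (@elem_sym_gt0 R _ _ _ a_gt0 (ltn_ord k)).
rewrite /ratio ler_pdivrMr ?ea_gt0 // mulrAC ler_pdivlMr ?ea_gt0 //.
by rewrite mulrC [elem_sym m a * _]mulrC.
Qed.

Lemma ratfun_nondecreasing (R : realFieldType) q (a b : 'I_q -> R) :
  (forall k, 0 < a k) -> (forall k, 0 < b k) ->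
  (forall m : nat, (0 < m)%N -> (m < q)%N ->
      elem_sym m b / elem_sym m a <= elem_sym m.+1 b / elem_sym m.+1 a) ->
  1 <= elem_sym 1 b / elem_sym 1 a ->
  forall x y : R, 0 < x -> x <= y -> ratfun a b x <= ratfun a b y.
Proof.
move=> a_gt0 b_gt0 ratio_succ ratio1 x y x_gt0 le_xy.
have y_gt0 := lt_le_trans x_gt0 le_xy.
rewrite /ratfun ler_pdivrMr ?prod_add_gt0 // mulrAC ler_pdivlMr ?prod_add_gt0 //.
rewrite !prod_add_elem_sym; apply: sum_expr_cross_le; last exact: le_xy.
  exact: elem_sym_cross_le.
exact: ltW.
Qed.

Lemma ratfunC (R : fieldType) q (a b : 'I_q -> R) x : ratfun b a x = (ratfun a b x)^-1.
Proof. by rewrite /ratfun invf_div. Qed.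

Theorem lemma2 (R : realFieldType) (q : nat) (a b : 'I_q -> R)
  (hq : (0 < q)%N)
  (ha : forall k, 0 < a k) (hb : forall k, 0 < b k) :
  ((forall m : nat, (0 < m)%N -> (m < q)%N ->
      elem_sym m b / elem_sym m a <= elem_sym m.+1 b / elem_sym m.+1 a) ->
   1 <= elem_sym 1 b / elem_sym 1 a ->
   forall x y : R, 0 < x -> x <= y -> ratfun a b x <= ratfun a b y)
  /\
  ((forall m : nat, (0 < m)%N -> (m < q)%N ->
      elem_sym m.+1 b / elem_sym m.+1 a <= elem_sym m b / elem_sym m a) ->
   elem_sym 1 b / elem_sym 1 a <= 1 ->
   forall x y : R, 0 < x -> x <= y -> ratfun a b y <= ratfun a b x).
Proof.
split; first exact: ratfun_nondecreasing.
move=> ratio_succ ratio1 x y x_gt0 le_xy.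
have ratfun_gt0 z : 0 < z -> 0 < ratfun a b z.
  by move=> z_gt0; apply: divr_gt0; apply: prod_add_gt0.
have ratio_gt0 m : (m <= q)%N -> 0 < elem_sym m b / elem_sym m a.
  by move=> le_mq; apply: divr_gt0; apply: (@elem_sym_gt0 R).
rewrite -lef_pV2 ?posrE ?ratfun_gt0 ?(lt_le_trans x_gt0) // -!ratfunC.
apply: ratfun_nondecreasing => // [m m_gt0 lt_mq|]; last first.
  by rewrite -invf_div invf_ge1 ?ratio_gt0.
by rewrite -!(invf_div (elem_sym _ b)) lef_pV2 ?posrE ?ratio_gt0 ?ratio_succ // ltnW.
Qed.
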